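(* Let $X\in G$, let $(s_1,\ldots,s_k)$ be an oriented path in $\Gamma_X$ starting at a vertex $Y$, and let $\alpha=s_1\cdots s_k\in P$. (1) If $\alpha\preccurlyeq Y^\circ$, then $(s_1,\ldots,s_k)$ is an oriented black path. (2) If $\alpha\preccurlyeq (Y^{-1})^\circ$, then $(s_1,\ldots,s_k)$ is an oriented grey path.
   Context: $G$ is a Garside group: it has a lattice order $\preccurlyeq$ invariant under left multiplication ($a\preccurlyeq b$ iff $a^{-1}b\in P$, where $P=\{p\in G:1\preccurlyeq p\}$), with meet $\wedge$; there is a Garside element $\Delta\in P$ such that $[1,\Delta]$ is finite and generates $G$ and $\Delta^{-1}P\Delta=P$; and $P$ is atomic. Elements of $[1,\Delta]$ are simple. $\tau(x)=\Delta^{-1}x\Delta$; $X^a=a^{-1}Xa$. Left normal form $X=\Delta^p x_1\cdots x_r$: $p$ maximal with $\Delta^p\preccurlyeq X$, each $x_i\neq 1$ the maximal simple prefix of $x_i\cdots x_r$; $\inf X=p$, $\sup X=p+r$. $\iota(X)=\tau^{-p}(x_1)$ if $r>0$, $\iota(\Delta^p)=1$. $Y^\circ=Y\Delta^{-\inf Y}$. $\mathbf c(X)=X^{\iota(X)}$. $SSS(X)$: conjugates of $X$ of maximal infimum and minimal supremum; $USS(X)$: those $Y\in SSS(X)$ with $\mathbf c^m(Y)=Y$ for some $m>0$. A minimal simple element for $Y\in USS(X)$ is a simple $s\neq1$ with $Y^s\in USS(X)$ such that no prefix $t\ne1$, $t\neq s$ of $s$ has $Y^t\in USS(X)$. $\Gamma_X$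 is the directed graph with vertex set $USS(X)$ and an arrow labeled $s$ from $Y$ to $Y^s$ for each $Y\in USS(X)$ and each minimal simple element $s$ for $Y$. An arrow $s$ starting at $Y$ is black if $s\preccurlyeq\iota(Y)$ and grey if $s\preccurlyeq\iota(Y^{-1})$ (it may be both). An oriented path is a sequence of arrows $(s_1,\ldots,s_k)$, each starting at the endpoint of the previous one; it is black (grey) if all its arrows are black (grey). *)

From Stdlib Require Import ZArith List ClassicalEpsilon.
Import ListNotations.
Set Implicit Arguments.
Open Scope Z_scope.

Definition zpow_gen {T : Type} (mul : T -> T -> T) (one : T) (inv : T -> T)
  (g : T) (p : Z) : T :=
  match p with
  | Z0 => one
  | Zpos n => Nat.iter (Pos.to_nat n) (fun x => mul x g) one
  | Zneg n => Nat.iter (Pos.to_nat n) (fun x => mul x (inv g)) one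
  end.

Definition lprod_gen {T : Type} (mul : T -> T -> T) (one : T) (l : list T) : T :=
  fold_right mul one l.

Record GarsideGroup := {
  carrier :> Type;
  mul : carrier -> carrier -> carrier;
  one : carrier;
  inv : carrier -> carrier;
  mulA : forall a b c, mul a (mul b c) = mul (mul a b) c;
  mul1l : forall a, mul one a = a;
  mul1r : forall a, mul a one = a;
  mulVl : forall a, mul (inv a) a = one;
  mulVr : forall a, mul a (inv a) = one;
  (* positive cone P; a ≼ b iff a^-1 b ∈ P *)
  Pos : carrier -> Prop;
  (* ≼ is a partial order *)
  Pos_one : Pos one;
  Pos_mul : forall a b, Pos a -> Pos b -> Pos (mul a b);
  Pos_antisym : forall a, Pos a -> Pos (inv a) -> a = one;
  meet : carrier -> carrier -> carrier;
  meet_l : forall a b, Pos (mul (inv (meet a b)) a);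
  meet_r : forall a b, Pos (mul (inv (meet a b)) b);
  meet_glb : forall a b c, Pos (mul (inv c) a) -> Pos (mul (inv c) b) ->
                           Pos (mul (inv c) (meet a b));
  join_ex : forall a b, exists c, Pos (mul (inv a) c) /\ Pos (mul (inv b) c) /\
              (forall d, Pos (mul (inv a) d) -> Pos (mul (inv b) d) -> Pos (mul (inv c) d));
  Delta : carrier;
  Pos_Delta : Pos Delta;
  simples_finite : exists l : list carrier, forall s,
      Pos s -> Pos (mul (inv s) Delta) -> In s l;
  simples_generate : forall g, exists l : list (bool * carrier),
      (forall bs : bool * carrier, In bs l -> Pos (snd bs) /\ Pos (mul (inv (snd bs)) Delta)) /\
      g = lprod_gen mul one (map (fun bs : bool * carrier => if fst bs then snd bs else inv (snd bs)) l);
  conj_Delta_sub : forall p, Pos p -> Pos (mul (inv Delta) (mul p Delta));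
  conj_Delta_sup : forall q, Pos q -> exists p, Pos p /\ q = mul (inv Delta) (mul p Delta);
  atomic : forall p, Pos p -> exists N : nat, forall l : list carrier,
      (forall a, In a l -> Pos a /\ a <> one) -> lprod_gen mul one l = p ->
      (length l <= N)%nat
}.

Arguments mul {g0}.
Arguments one {g0}.
Arguments inv {g0}.
Arguments Pos {g0}.
Arguments Delta {g0}.
Arguments meet {g0}.

Section Garside.
Context {G : GarsideGroup}.

Definition zpow (a : G) (p : Z) : G := zpow_gen mul one inv a p.
Definition lprod (l : list G) : G := lprod_gen mul one l.

Definition prec (a b : G) : Prop := Pos (mul (inv a) b).

Definition conj (X a : G) : G := mul (inv a) (mul X a).

Definition tau_pow (k : Z) (x : G) : G := conj x (zpow Delta k).

Definition simple (s : G) : Prop := prec one s /\ prec s Delta.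

Definition max_simple_prefix (s a : G) : Prop :=
  simple s /\ prec s a /\ forall t, simple t -> prec t a -> prec t s.

Fixpoint nf_tail (a : G) (xs : list G) : Prop :=
  match xs with
  | [] => a = one
  | x :: xs' => x <> one /\ max_simple_prefix x a /\ nf_tail (mul (inv x) a) xs'
  end.

Definition lnf (X : G) (p : Z) (xs : list G) : Prop :=
  prec (zpow Delta p) X /\ (forall q, prec (zpow Delta q) X -> q <= p) /\
  nf_tail (mul (zpow Delta (- p)) X) xs.

Definition nf (X : G) : Z * list G :=
  epsilon (inhabits (0, @nil G)) (fun pr => lnf X (fst pr) (snd pr)).

Definition inf (X : G) : Z := fst (nf X).
Definition sup (X : G) : Z := fst (nf X) + Z.of_nat (length (snd (nf X))).

Definition iota (X : G) : G :=
  match snd (nf X) with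
  | [] => one
  | x1 :: _ => tau_pow (- inf X) x1
  end.

Definition circ (Y : G) : G := mul Y (zpow Delta (- inf Y)).

Definition cyc (X : G) : G := conj X (iota X).

Definition conjugate (Y X : G) : Prop := exists a, Y = conj X a.

Definition SSS (X Y : G) : Prop :=
  conjugate Y X /\ forall Z, conjugate Z X -> inf Z <= inf Y /\ sup Y <= sup Z.

Definition USS (X Y : G) : Prop :=
  SSS X Y /\ exists m : nat, (0 < m)%nat /\ Nat.iter m cyc Y = Y.

Definition minimal_simple (X Y s : G) : Prop :=
  USS X Y /\ simple s /\ s <> one /\ USS X (conj Y s) /\
  forall t, prec one t -> prec t s -> t <> one -> t <> s -> ~ USS X (conj Y t).

(* oriented path in Gamma_X starting at Y, given by its labels *)
Fixpoint oriented_path (X Y : G) (ss : list G) : Prop :=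
  match ss with
  | [] => USS X Y
  | s :: ss' => minimal_simple X Y s /\ oriented_path X (conj Y s) ss'
  end.

Definition black_arrow (Y s : G) : Prop := prec s (iota Y).
Definition grey_arrow (Y s : G) : Prop := prec s (iota (inv Y)).

Fixpoint black_path (Y : G) (ss : list G) : Prop :=
  match ss with
  | [] => True
  | s :: ss' => black_arrow Y s /\ black_path (conj Y s) ss'
  end.

Fixpoint grey_path (Y : G) (ss : list G) : Prop :=
  match ss with
  | [] => True
  | s :: ss' => grey_arrow Y s /\ grey_path (conj Y s) ss'
  end.

End Garside.

From Stdlib Require Import ZArith List Lia Classical ClassicalEpsilon.
Import ListNotations.
Open Scope Z_scope.

(** If [s] is a simple prefix of [Y° = tau^(-inf Y)(x_1 ... x_r)], it is a
    prefix of the maximal simple prefix [iota Y] of [Y°]. Inside the super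
    summit set, conjugation does not change [inf] and [sup], so [s^-1 alpha]
    is again a prefix of [(Y^s)°], and one inducts along the path. The grey
    case is the black one for [Y^-1], because [inf (Y^-1) = - sup Y].
    Underneath lie the existence of left normal forms (positive elements are
    products of simple elements, and atomicity bounds the number of factors)
    and the characterisation [Y <= Delta^r] iff [sup Y <= r]. *)

Section GarsideTheory.
Context {G : GarsideGroup}.
Local Infix "**" := mul (at level 40, left associativity).
Local Notation Dpow := (@zpow G (@Delta G)).

Lemma mulKg (a b : G) : inv a ** (a ** b) = b.
Proof. now rewrite mulA, mulVl, mul1l. Qed.
Lemma mulKVg (a b : G) : a ** (inv a ** b) = b.
Proof. now rewrite mulA, mulVr, mul1l. Qed.
Lemma mulgK (a b : G) : b ** a ** inv a = b.
Proof. now rewrite <- mulA, mulVr, mul1r. Qed.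
Lemma mulgKV (a b : G) : b ** inv a ** a = b.
Proof. now rewrite <- mulA, mulVl, mul1r. Qed.

Lemma inv_unique (a b : G) : a ** b = one -> inv a = b.
Proof. intros H. now rewrite <- (mulKg a b), H, mul1r. Qed.
Lemma invgK (a : G) : inv (inv a) = a.
Proof. apply inv_unique, mulVl. Qed.
Lemma invMg (a b : G) : inv (a ** b) = inv b ** inv a.
Proof. apply inv_unique. now rewrite mulA, mulgK, mulVr. Qed.
Lemma invg1 : inv (@one G) = one.
Proof. apply inv_unique, mul1l. Qed.

Lemma zpow_nat (g : G) n : zpow g (Z.of_nat n) = Nat.iter n (fun x => x ** g) one.
Proof.
  destruct n; [reflexivity|].
  unfold zpow, zpow_gen. simpl. now rewrite SuccNat2Pos.id_succ.
Qed.
Lemma zpow_opp_nat (g : G) n :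
  zpow g (- Z.of_nat n) = Nat.iter n (fun x => x ** inv g) one.
Proof.
  destruct n; [reflexivity|].
  unfold zpow, zpow_gen. simpl. now rewrite SuccNat2Pos.id_succ.
Qed.

Lemma zpow_succ (g : G) z : zpow g (Z.succ z) = zpow g z ** g.
Proof.
  destruct (Z.le_gt_cases 0 z) as [Hz | Hz].
  - replace z with (Z.of_nat (Z.to_nat z)) by lia.
    now rewrite <- Nat2Z.inj_succ, !zpow_nat.
  - replace z with (- Z.of_nat (S (Z.to_nat (- z - 1)))) by lia.
    replace (Z.succ _) with (- Z.of_nat (Z.to_nat (- z - 1))) by lia.
    rewrite !zpow_opp_nat. simpl. now rewrite mulgKV.
Qed.
Lemma zpow_pred (g : G) z : zpow g (Z.pred z) = zpow g z ** inv g.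
Proof. rewrite <- (Z.succ_pred z) at 2. now rewrite zpow_succ, mulgK. Qed.

Lemma zpow_add (g : G) a b : zpow g (a + b) = zpow g a ** zpow g b.
Proof.
  induction b using Z.peano_ind.
  - rewrite Z.add_0_r. unfold zpow at 3. simpl. now rewrite mul1r.
  - now rewrite Z.add_succ_r, !zpow_succ, IHb, mulA.
  - now rewrite Z.add_pred_r, !zpow_pred, IHb, mulA.
Qed.
Lemma zpow1 (g : G) : zpow g 1 = g.
Proof. apply mul1l. Qed.
Lemma zpow_opp (g : G) z : zpow g (- z) = inv (zpow g z).
Proof. symmetry. apply inv_unique. now rewrite <- zpow_add, Z.add_opp_diag_r. Qed.

Lemma conjgM (a b c : G) : conj a (b ** c) = conj (conj a b) c.
Proof. unfold conj. now rewrite invMg, !mulA. Qed.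
Lemma conjMg (a b c : G) : conj (a ** b) c = conj a c ** conj b c.
Proof. unfold conj. now rewrite !mulA, mulgK. Qed.
Lemma conjVg (a c : G) : conj (inv a) c = inv (conj a c).
Proof. unfold conj. now rewrite !invMg, invgK, !mulA. Qed.
Lemma conjg1 (a : G) : conj a one = a.
Proof. unfold conj. now rewrite invg1, mul1l, mul1r. Qed.
Lemma conjgK (a c : G) : conj (conj a c) (inv c) = a.
Proof. unfold conj. now rewrite invgK, !mulA, mulVr, mul1l, mulgK. Qed.
Lemma conjgKV (a c : G) : conj (conj a (inv c)) c = a.
Proof. rewrite <- (invgK c) at 2. apply conjgK. Qed.
Lemma conjgC (a c : G) : c ** conj a c = a ** c.
Proof. apply mulKVg. Qed.

Lemma conj_Delta_Dpow k : conj Delta (Dpow k) = Delta.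
Proof.
  assert (Hcomm : Delta ** Dpow k = Dpow k ** Delta).
  { transitivity (Dpow (1 + k)).
    - now rewrite zpow_add, zpow1.
    - now rewrite Z.add_comm, zpow_add, zpow1. }
  unfold conj. now rewrite Hcomm, mulKg.
Qed.

Lemma Pos_conj_Dpow k p : Pos p -> Pos (conj p (Dpow k)).
Proof.
  revert p. induction k using Z.peano_ind; intros p Hp.
  - now rewrite conjg1.
  - rewrite zpow_succ, conjgM. now apply conj_Delta_sub, IHk.
  - rewrite zpow_pred, conjgM.
    destruct (conj_Delta_sup _ _ (IHk p Hp)) as [q [Hq ->]].
    change (Pos (conj (conj q Delta) (inv Delta))). now rewrite conjgK.
Qed.

Lemma prec_refl (a : G) : prec a a.
Proof. unfold prec. rewrite mulVl. apply Pos_one. Qed.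
Lemma prec_trans (a b c : G) : prec a b -> prec b c -> prec a c.
Proof.
  unfold prec. intros Hab Hbc.
  replace (inv a ** c) with ((inv a ** b) ** (inv b ** c)) by now rewrite <- mulA, mulKVg.
  now apply Pos_mul.
Qed.
Lemma prec_antisym (a b : G) : prec a b -> prec b a -> a = b.
Proof.
  unfold prec. intros Hab Hba.
  assert (H1 : inv a ** b = one) by (apply Pos_antisym; rewrite ?invMg, ?invgK; auto).
  now rewrite <- (mulKVg a b), H1, mul1r.
Qed.
Lemma prec_mul2l (c a b : G) : prec (c ** a) (c ** b) <-> prec a b.
Proof. unfold prec. now rewrite invMg, <- mulA, mulKg. Qed.
Lemma prec_mulr (a b c : G) : prec a b -> Pos c -> prec a (b ** c).
Proof. unfold prec. intros. rewrite mulA. now apply Pos_mul. Qed.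
Lemma prec_mulr_self (a c : G) : Pos c -> prec a (a ** c).
Proof. intros. apply prec_mulr; [apply prec_refl | assumption]. Qed.
Lemma prec1g (a : G) : prec one a <-> Pos a.
Proof. unfold prec. now rewrite invg1, mul1l. Qed.
Lemma prec_one_eq (a : G) : Pos a -> prec a one -> a = one.
Proof. intros. now apply prec_antisym; [|apply prec1g]. Qed.
Lemma prec_conj_Dpow (a b : G) k : prec a b -> prec (conj a (Dpow k)) (conj b (Dpow k)).
Proof. unfold prec. intros. rewrite <- conjVg, <- conjMg. now apply Pos_conj_Dpow. Qed.

Lemma prec_Delta_mulDelta (t : G) : Pos t -> prec Delta (t ** Delta).
Proof. apply conj_Delta_sub. Qed.

Lemma Pos_Dpow k : 0 <= k -> Pos (Dpow k).
Proof.
  intros Hk. replace k with (Z.of_nat (Z.to_nat k)) by lia.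
  induction (Z.to_nat k) as [|n IH]; [apply Pos_one|].
  rewrite Nat2Z.inj_succ, zpow_succ. apply Pos_mul; [exact IH | apply Pos_Delta].
Qed.

Lemma Delta_eq1_of_Pos_Dpow k : k < 0 -> Pos (Dpow k) -> @Delta G = one.
Proof.
  intros Hk H. apply Pos_antisym; [apply Pos_Delta|].
  rewrite <- (zpow1 Delta), <- zpow_opp. replace (- (1)) with (k + (-1 - k)) by lia.
  rewrite zpow_add. apply Pos_mul; [exact H | apply Pos_Dpow; lia].
Qed.

Lemma prec_Dpow_inv (W : G) q : prec W (Dpow (- q)) <-> prec (Dpow q) (inv W).
Proof.
  unfold prec. split; intros H.
  - replace (inv (Dpow q) ** inv W) with (conj (inv W ** Dpow (- q)) (Dpow q))
      by (unfold conj; now rewrite zpow_opp, !mulA, mulgKV).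
    now apply Pos_conj_Dpow.
  - replace (inv W ** Dpow (- q)) with (conj (inv (Dpow q) ** inv W) (Dpow (- q)))
      by (unfold conj; now rewrite zpow_opp, invgK, !mulA, mulVr, mul1l).
    now apply Pos_conj_Dpow.
Qed.

Lemma simple_Pos (s : G) : simple s -> Pos s.
Proof. intros [H _]. now apply prec1g. Qed.
Lemma simple_conj_Dpow (s : G) k : simple s -> simple (conj s (Dpow k)).
Proof.
  intros [H1 H2]. split.
  - apply prec1g, Pos_conj_Dpow, prec1g, H1.
  - assert (H := prec_conj_Dpow _ _ k H2). now rewrite conj_Delta_Dpow in H.
Qed.
Lemma simple_Delta : simple (@Delta G).
Proof. split; [apply prec1g, Pos_Delta | apply prec_refl]. Qed.
Lemma Delta_neq1 (s : G) : simple s -> s <> one -> @Delta G <> one.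
Proof. intros [H1 H2] Hs HD. apply Hs, prec_antisym; [rewrite <- HD|]; assumption. Qed.

Lemma simple_quotient (s j : G) : Pos s -> prec s j -> prec j Delta -> simple (inv s ** j).
Proof.
  intros Hs Hsj HjD. split; [now apply prec1g|].
  apply (prec_mul2l s). rewrite mulKVg.
  eapply prec_trans; [exact HjD | now apply prec_Delta_mulDelta].
Qed.

Lemma lprod_cons (x : G) l : lprod (x :: l) = x ** lprod l.
Proof. reflexivity. Qed.
Lemma lprod_app (l1 l2 : list G) : lprod (l1 ++ l2) = lprod l1 ** lprod l2.
Proof.
  induction l1 as [|x l1 IH]; simpl; [now rewrite mul1l|].
  change (x ** lprod (l1 ++ l2) = x ** lprod l1 ** lprod l2). now rewrite IH, mulA.
Qed.
Lemma lprod_repeat_Delta n : lprod (repeat (@Delta G) n) = Dpow (Z.of_nat n).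
Proof.
  induction n as [|n IH]; [reflexivity|].
  simpl repeat. rewrite lprod_cons, IH, Nat2Z.inj_succ, <- Z.add_1_l, zpow_add, zpow1.
  reflexivity.
Qed.
Lemma Pos_lprod (l : list G) : Forall simple l -> Pos (lprod l).
Proof.
  induction 1; [apply Pos_one|]. rewrite lprod_cons. apply Pos_mul; auto. now apply simple_Pos.
Qed.

Lemma lprod_prec_Dpow (l : list G) : Forall simple l -> prec (lprod l) (Dpow (Z.of_nat (length l))).
Proof.
  induction 1 as [|x l Hx Hl IH]; [apply prec_refl|].
  rewrite lprod_cons. simpl length.
  rewrite Nat2Z.inj_succ, <- Z.add_1_r, zpow_add, zpow1.
  eapply prec_trans; [apply prec_mul2l, IH|].
  rewrite <- conjgC. apply prec_mul2l.
  assert (H := prec_conj_Dpow _ _ (Z.of_nat (length l)) (proj2 Hx)).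
  now rewrite conj_Delta_Dpow in H.
Qed.

(** * Positive elements are products of simple elements *)

Definition simple_product (a : G) : Prop := exists l, Forall simple l /\ a = lprod l.

Lemma simple_product_mul a b : simple_product a -> simple_product b -> simple_product (a ** b).
Proof.
  intros [l1 [H1 ->]] [l2 [H2 ->]]. exists (l1 ++ l2).
  split; [now apply Forall_app | now rewrite lprod_app].
Qed.
Lemma simple_product_simple s : simple s -> simple_product s.
Proof. intros. exists [s]. split; [auto | apply eq_sym, mul1r]. Qed.

Lemma Delta_fraction (g : G) :
  exists (m : nat) t, Forall simple t /\ g = Dpow (- Z.of_nat m) ** lprod t.
Proof.
  destruct (simples_generate G g) as [l [Hl ->]].
  induction l as [|[b s] l IH].
  - exists O, nil. split; [auto | apply eq_sym, mul1l].
  - destruct IH as [m [t [Ht Heq]]]; [intros bs Hbs; apply Hl; now right|].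
    destruct (Hl (b, s) (or_introl eq_refl)) as [Hs HsD]. simpl in Hs, HsD.
    change (exists m' t', Forall simple t' /\
      (if b then s else inv s) ** lprod_gen mul one (map (fun bs : bool * G =>
        if fst bs then snd bs else inv (snd bs)) l) = Dpow (- Z.of_nat m') ** lprod t').
    rewrite Heq. destruct b.
    + exists m, (conj s (Dpow (- Z.of_nat m)) :: t). split.
      * constructor; [apply simple_conj_Dpow; split; [apply prec1g|]|]; assumption.
      * now rewrite lprod_cons, !mulA, conjgC.
    + (* [s^-1 = (s^-1 Delta) Delta^-1], with [s^-1 Delta] simple *)
      exists (S m), (conj (inv s ** Delta) (Dpow (- Z.of_nat (S m))) :: t). split.
      * constructor; [|assumption]. apply simple_conj_Dpow, simple_quotient; [assumption..|apply prec_refl].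
      * rewrite lprod_cons, !mulA, conjgC, <- (mulA _ (inv s) Delta).
        do 2 f_equal. symmetry. rewrite <- (zpow1 Delta) at 1.
        rewrite <- zpow_add. f_equal. lia.
Qed.

Lemma simple_product_div_simple (l : list G) s : Forall simple l ->
  simple s -> prec s (lprod l) -> simple_product (inv s ** lprod l).
Proof.
  intros Hl. revert s. induction Hl as [|t l Ht Hl IH]; intros s Hs Hsl.
  - assert (s = one) as -> by (apply prec_one_eq; [apply simple_Pos |]; assumption).
    rewrite invg1, mul1l. exists nil. auto.
  - rewrite lprod_cons in *.
    (* split off the simple factor [s^-1 j], where [j] is the join of [s] and [t] *)
    destruct (join_ex G s t) as [j [Hsj [Htj Hj]]].
    assert (HjD : prec j Delta) by (apply Hj; apply Hs || apply Ht).
    set (r := inv t ** j).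
    assert (Hr : simple r) by (apply simple_quotient; auto using simple_Pos).
    assert (Hrl : prec r (lprod l)).
    { apply (prec_mul2l t). unfold r. rewrite mulKVg.
      apply Hj; [exact Hsl | apply prec_mulr_self, Pos_lprod, Hl]. }
    replace (inv s ** (t ** lprod l)) with ((inv s ** j) ** (inv r ** lprod l))
      by (unfold r; now rewrite invMg, invgK, !mulA, mulgK).
    apply simple_product_mul; [|now apply IH].
    apply simple_product_simple, simple_quotient; auto using simple_Pos.
Qed.

Lemma simple_product_div (c b : G) :
  simple_product c -> simple_product b -> prec c b -> simple_product (inv c ** b).
Proof.
  intros [lc [Hc ->]]. revert b. induction Hc as [|s l Hs Hl IH]; intros b Hb Hcb.
  - change (lprod []) with (@one G). now rewrite invg1, mul1l.
  - rewrite lprod_cons in *. rewrite invMg, <- mulA.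
    destruct Hb as [lb [Hlb ->]]. apply IH.
    + apply simple_product_div_simple; auto.
      eapply prec_trans; [|exact Hcb]. now apply prec_mulr_self, Pos_lprod.
    + apply (prec_mul2l s). now rewrite mulKVg.
Qed.

Lemma Pos_simple_product (a : G) : Pos a -> simple_product a.
Proof.
  intros Ha. destruct (Delta_fraction a) as [m [t [Ht Heq]]].
  rewrite zpow_opp in Heq. rewrite Heq. apply simple_product_div.
  - exists (repeat Delta m). split; [|now rewrite lprod_repeat_Delta].
    apply Forall_forall. intros x Hx. apply repeat_spec in Hx as ->. apply simple_Delta.
  - now exists t.
  - unfold prec. now rewrite <- Heq.
Qed.

(** * Normal forms *)

Lemma meet_Delta_max_simple_prefix (a : G) : Pos a -> max_simple_prefix (meet a Delta) a.
Proof.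
  intros Ha. split; [split|split].
  - apply prec1g. rewrite <- mul1l, <- invg1.
    apply meet_glb; rewrite invg1, mul1l; [assumption | apply Pos_Delta].
  - apply meet_r.
  - apply meet_l.
  - intros t [_ Ht] Hta. now apply meet_glb.
Qed.

Lemma meet_Delta_neq1 (a : G) : Pos a -> a <> one -> meet a Delta <> one.
Proof.
  intros Ha Ha1 Hm. destruct (Pos_simple_product a Ha) as [l [Hl ->]].
  induction Hl as [|t l Ht Hl IH]; [now apply Ha1|].
  rewrite lprod_cons in *. destruct (classic (t = one)) as [-> | Hne].
  - rewrite mul1l in *. auto.
  - apply Hne, prec_one_eq; [now apply simple_Pos|].
    rewrite <- Hm. apply meet_glb; [now apply prec_mulr_self, Pos_lprod | apply Ht].
Qed.

Lemma nf_tail_exists (a : G) : Pos a -> exists xs, nf_tail a xs.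
Proof.
  intros Ha. destruct (atomic G a Ha) as [N HN]. revert a Ha HN.
  (* peel off [meet a Delta]: each step shortens the atomic length bound *)
  induction N as [|N IH]; intros a Ha HN;
    (destruct (classic (a = one)) as [-> | Ha1]; [now exists nil|]).
  - exfalso. assert (H := HN [a]). simpl in H.
    assert (1 <= 0)%nat by (apply H; [intros x [<- | []]; auto | apply mul1r]). lia.
  - set (x := meet a Delta).
    destruct (meet_Delta_max_simple_prefix a Ha) as [Hxs [Hxa Hxm]].
    assert (Hx1 : x <> one) by now apply meet_Delta_neq1.
    destruct (IH (inv x ** a)) as [xs Hxs']; [exact Hxa| |now exists (x :: xs)].
    intros l Hl Hprod.
    assert (length (x :: l) <= S N)%nat by
      (apply HN; [intros y [<- | Hy]; [split; [apply simple_Pos|]|apply Hl]; assumption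
                 | change (x ** lprod l = a); unfold lprod; rewrite Hprod; apply mulKVg]).
    simpl in *. lia.
Qed.

Lemma Z_max_of_bounded (P : Z -> Prop) a n : P a -> (forall q, P q -> q <= a + Z.of_nat n) ->
  exists p, P p /\ forall q, P q -> q <= p.
Proof.
  revert a. induction n as [|n IH]; intros a Ha Hb.
  - exists a. split; [assumption|]. intros q Hq. specialize (Hb q Hq). lia.
  - destruct (classic (exists q, P q /\ a < q)) as [[q [Hq Hlt]] | Hno].
    + apply (IH q Hq). intros q' Hq'. specialize (Hb q' Hq'). lia.
    + exists a. split; [assumption|]. intros q Hq.
      apply Z.nlt_ge. intros Hlt. apply Hno. eauto.
Qed.

Lemma Dpow_prefix_bounded (Z : G) : @Delta G <> one ->
  exists m N, prec (Dpow (- Z.of_nat m)) Z /\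
    forall q, prec (Dpow q) Z -> q <= - Z.of_nat m + Z.of_nat N.
Proof.
  intros HD. destruct (Delta_fraction Z) as [m [t [Ht Heq]]].
  destruct (atomic G (lprod t) (Pos_lprod t Ht)) as [N HN].
  exists m, N. split.
  { unfold prec. rewrite Heq, mulKg. now apply Pos_lprod. }
  (* [Delta^q <= Z] factors [lprod t] as [q + m] copies of [Delta] times a positive element *)
  intros q Hq. apply Z.nlt_ge. intros HqN.
  set (n := Z.to_nat (q + Z.of_nat m)). set (e := inv (Dpow q) ** Z).
  assert (HT : lprod t = lprod (repeat Delta n) ** e).
  { rewrite lprod_repeat_Delta. unfold n, e. rewrite Z2Nat.id by lia.
    rewrite Z.add_comm, zpow_add, Heq, !mulA, mulgK, <- zpow_add, Z.add_opp_diag_r.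
    apply eq_sym, mul1l. }
  assert (HDl : forall x : G, In x (repeat Delta n) -> Pos x /\ x <> one)
    by (intros x Hx; apply repeat_spec in Hx as ->; split; [apply Pos_Delta | exact HD]).
  destruct (classic (e = one)) as [He | He].
  - assert (Hl : (length (repeat Delta n) <= N)%nat)
      by (apply HN; [exact HDl | change (lprod (repeat Delta n) = lprod t);
                                  now rewrite HT, He, mul1r]).
    rewrite repeat_length in Hl. unfold n in Hl. lia.
  - assert (Hl : (length (repeat Delta n ++ [e]) <= N)%nat).
    { apply HN.
      - intros x Hx. apply in_app_or in Hx as [Hx | [<- | []]]; auto.
      - change (lprod (repeat Delta n ++ [e]) = lprod t).
        rewrite lprod_app, HT. f_equal. apply mul1r. }
    rewrite length_app, repeat_length in Hl. simpl in Hl. unfold n in Hl. lia.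
Qed.

Lemma lnf_exists (Z : G) : @Delta G <> one -> exists p xs, lnf Z p xs.
Proof.
  intros HD. destruct (Dpow_prefix_bounded Z HD) as [m [N [Hm HN]]].
  destruct (Z_max_of_bounded (fun q => prec (Dpow q) Z) _ N Hm HN) as [p [Hp Hmax]].
  destruct (nf_tail_exists (Dpow (- p) ** Z)) as [xs Hxs]; [now rewrite zpow_opp|].
  now exists p, xs.
Qed.

Lemma lnf_nf (Z : G) : @Delta G <> one -> lnf Z (inf Z) (snd (nf Z)).
Proof.
  intros HD. apply (epsilon_spec (inhabits (0, @nil G)) (fun pr => lnf Z (fst pr) (snd pr))).
  destruct (lnf_exists Z HD) as [p [xs H]]. now exists (p, xs).
Qed.

Lemma prec_Dpow_inf (Z : G) : @Delta G <> one -> prec (Dpow (inf Z)) Z.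
Proof. intros HD. apply (lnf_nf Z HD). Qed.
Lemma inf_max (Z : G) q : @Delta G <> one -> prec (Dpow q) Z -> q <= inf Z.
Proof. intros HD. apply (lnf_nf Z HD). Qed.

Lemma nf_tail_lprod (xs : list G) a : nf_tail a xs -> a = lprod xs /\ Forall simple xs.
Proof.
  revert a. induction xs as [|x xs IH]; intros a H; [now split|].
  destruct H as [_ [[Hs _] Ht]]. destruct (IH _ Ht) as [Heq Hf].
  split; [|now constructor]. now rewrite lprod_cons, <- Heq, mulKVg.
Qed.

Lemma prec_Dpow_sup (Z : G) : @Delta G <> one -> prec Z (Dpow (sup Z)).
Proof.
  intros HD. assert (H := lnf_nf Z HD). unfold sup, inf in *.
  destruct (nf Z) as [p xs]. simpl in *. destruct H as [_ [_ Ht]].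
  destruct (nf_tail_lprod xs _ Ht) as [Heq Hf].
  rewrite zpow_opp in Heq. rewrite <- (mulKVg (Dpow p) Z), Heq, zpow_add.
  now apply prec_mul2l, lprod_prec_Dpow.
Qed.

Lemma prec_Delta_mul_max_simple_prefix (w a x : G) : Pos w -> Pos a ->
  max_simple_prefix x a -> prec Delta (w ** a) -> prec Delta (w ** x).
Proof.
  intros Hw Ha [Hxs [Hxa Hxm]] HDa.
  destruct (join_ex G w Delta) as [j [Hwj [HDj Hj]]].
  assert (Hjwa : prec j (w ** a)) by (apply Hj; [now apply prec_mulr_self | exact HDa]).
  assert (HjwD : prec j (w ** Delta))
    by (apply Hj; [apply prec_mulr_self, Pos_Delta | now apply prec_Delta_mulDelta]).
  assert (Hf : prec (inv w ** j) x).
  { apply Hxm; [split; [now apply prec1g|] | ];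
      apply (prec_mul2l w); now rewrite mulKVg. }
  eapply prec_trans; [exact HDj|]. rewrite <- (mulKVg w j). now apply prec_mul2l.
Qed.

Lemma nf_tail_length_le (xs : list G) a k : nf_tail a xs -> Pos a ->
  prec a (Dpow (Z.of_nat k)) -> (length xs <= k)%nat.
Proof.
  revert a k. induction xs as [|x xs IH]; intros a k Ht Ha Hak; [simpl; lia|].
  destruct Ht as [Hx1 [Hxp Ht]]. assert (Hxp' := Hxp). destruct Hxp' as [Hxs [Hxa _]].
  destruct k as [|k].
  - exfalso. apply Hx1.
    assert (a = one) as -> by (apply prec_one_eq; assumption).
    apply prec_one_eq; [apply simple_Pos|]; assumption.
  - simpl. cut (length xs <= k)%nat; [lia|].
    (* with [w a = Delta^(k+1)] we get [Delta <= w x]; cancel one [Delta] and recurse *)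
    set (w := Dpow (Z.of_nat (S k)) ** inv a).
    assert (Hw : Pos w).
    { assert (H := proj1 (prec_Dpow_inv a (- Z.of_nat (S k)))).
      rewrite Z.opp_involutive in H. specialize (H Hak).
      unfold prec in H. now rewrite zpow_opp, invgK in H. }
    assert (Hwa : w ** a = Dpow (Z.of_nat (S k))) by apply mulgKV.
    assert (HDelta : inv Delta ** Dpow (Z.of_nat (S k)) = Dpow (Z.of_nat k))
      by now rewrite Nat2Z.inj_succ, <- Z.add_1_l, zpow_add, zpow1, mulKg.
    assert (HDw : prec Delta (w ** x)).
    { apply (prec_Delta_mul_max_simple_prefix w a x); auto.
      rewrite Hwa. unfold prec. rewrite HDelta. apply Pos_Dpow. lia. }
    set (v := inv Delta ** (w ** x)).
    assert (Hva : v ** (inv x ** a) = Dpow (Z.of_nat k))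
      by (unfold v; now rewrite !mulA, mulgK, <- mulA, Hwa, HDelta).
    apply (IH (inv x ** a)); [exact Ht | exact Hxa |].
    replace (inv x ** a) with (inv v ** Dpow (Z.of_nat k)) by now rewrite <- Hva, mulKg.
    unfold prec. rewrite invMg, invgK, <- mulA. apply Pos_conj_Dpow, HDw.
Qed.

Lemma sup_le_of_prec_Dpow (Z : G) r : @Delta G <> one -> prec Z (Dpow r) -> sup Z <= r.
Proof.
  intros HD HZ. assert (H := lnf_nf Z HD). unfold sup, inf in *.
  destruct (nf Z) as [p xs]. simpl in *. destruct H as [Hp [_ Ht]].
  set (a := Dpow (- p) ** Z) in Ht.
  assert (Ha : Pos a) by (unfold a; now rewrite zpow_opp).
  assert (Har : prec a (Dpow (r - p))).
  { apply (prec_mul2l (Dpow p)). unfold a.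
    rewrite zpow_opp, mulKVg, <- zpow_add. now replace (p + (r - p)) with r by lia. }
  destruct (Z.le_gt_cases 0 (r - p)) as [Hrp | Hrp].
  - rewrite <- (Z2Nat.id (r - p)) in Har by assumption.
    assert (Hl := nf_tail_length_le xs a _ Ht Ha Har). lia.
  - exfalso. apply HD, (Delta_eq1_of_Pos_Dpow (r - p)); [assumption|].
    rewrite <- (mulKVg a (Dpow (r - p))). now apply Pos_mul.
Qed.

Lemma inf_inv (Y : G) : @Delta G <> one -> inf (inv Y) = - sup Y.
Proof.
  intros HD. apply Z.le_antisymm.
  - cut (sup Y <= - inf (inv Y)); [lia|].
    apply sup_le_of_prec_Dpow; [assumption|]. now apply prec_Dpow_inv, prec_Dpow_inf.
  - apply inf_max; [assumption|].
    apply prec_Dpow_inv. rewrite Z.opp_involutive. now apply prec_Dpow_sup.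
Qed.

Lemma SSS_inf_sup_eq (X Y Y' : G) : SSS X Y -> SSS X Y' -> inf Y = inf Y' /\ sup Y = sup Y'.
Proof.
  intros [HcY HY] [HcY' HY']. destruct (HY Y' HcY'), (HY' Y HcY). split; lia.
Qed.

(** * Arrows below [Y°] *)

Lemma prec_iota_of_prec_circ (W s : G) : @Delta G <> one -> simple s ->
  prec s (circ W) -> prec s (iota W).
Proof.
  intros HD Hs Hsc. assert (Hnf := lnf_nf W HD).
  unfold iota, circ, inf in *. destruct (nf W) as [p xs]. simpl in *.
  destruct Hnf as [_ [_ Htl]].
  (* [W° = tau^(-p)(Delta^(-p) W)] *)
  assert (Hcirc : W ** Dpow (- p) = conj (Dpow (- p) ** W) (Dpow (- p)))
    by (unfold conj; now rewrite <- mulA, mulKg).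
  rewrite Hcirc in Hsc.
  destruct xs as [|x xs].
  - cbn [nf_tail] in Htl. rewrite Htl in Hsc. unfold conj in Hsc. rewrite mul1l, mulVl in Hsc.
    assert (s = one) as -> by (apply prec_one_eq; [apply simple_Pos|]; assumption).
    apply prec_refl.
  - destruct Htl as [_ [[_ [_ Hxmax]] _]].
    unfold tau_pow. rewrite <- (conjgK s (Dpow p)), <- zpow_opp. apply prec_conj_Dpow.
    apply Hxmax; [now apply simple_conj_Dpow|].
    apply (prec_conj_Dpow _ _ p) in Hsc. rewrite zpow_opp, conjgKV in Hsc. now rewrite zpow_opp.
Qed.

Lemma prec_circ_conj (W s L : G) : Pos s -> Pos L -> inf (conj W s) <= inf W ->
  prec (s ** L) (circ W) -> prec L (circ (conj W s)).
Proof.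
  intros Hs HL Hinf H. unfold circ, prec in *.
  set (p := inf W) in *. set (p' := inf (conj W s)) in *.
  replace (inv L ** (conj W s ** Dpow (- p'))) with
    ((inv (s ** L) ** (W ** Dpow (- p))) ** conj s (Dpow (- p)) ** Dpow (p - p')).
  - apply Pos_mul; [apply Pos_mul; [exact H | now apply Pos_conj_Dpow] | apply Pos_Dpow; lia].
  - unfold conj, Z.sub. rewrite zpow_add, !zpow_opp, invgK, invMg. now rewrite !mulA, !mulgKV.
Qed.

Lemma oriented_path_simple (X Y : G) ss : oriented_path X Y ss -> Forall simple ss.
Proof.
  revert Y. induction ss as [|s ss IH]; intros Y H; [constructor|].
  destruct H as [[_ [Hs _]] H]. constructor; eauto.
Qed.

Lemma black_path_of_prec_circ (X : G) ss Y : oriented_path X Y ss ->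
  prec (lprod ss) (circ Y) -> black_path Y ss.
Proof.
  revert Y. induction ss as [|s ss IH]; intros Y Hp Hc; [exact I|].
  destruct Hp as [[[HY _] [Hs [Hs1 [[HYs _] _]]]] Hp].
  assert (HL : Pos (lprod ss)) by eapply Pos_lprod, oriented_path_simple, Hp.
  rewrite lprod_cons in Hc. split.
  - apply prec_iota_of_prec_circ; [now apply (Delta_neq1 s) | assumption |].
    eapply prec_trans; [|exact Hc]. now apply prec_mulr_self.
  - apply IH; [assumption|]. apply prec_circ_conj; auto using simple_Pos.
    destruct (SSS_inf_sup_eq _ _ _ HY HYs). lia.
Qed.

Lemma grey_path_of_prec_circ_inv (X : G) ss Y : oriented_path X Y ss ->
  prec (lprod ss) (circ (inv Y)) -> grey_path Y ss.
Proof.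
  revert Y. induction ss as [|s ss IH]; intros Y Hp Hc; [exact I|].
  destruct Hp as [[[HY _] [Hs [Hs1 [[HYs _] _]]]] Hp].
  assert (HD := Delta_neq1 s Hs Hs1).
  assert (HL : Pos (lprod ss)) by eapply Pos_lprod, oriented_path_simple, Hp.
  rewrite lprod_cons in Hc. split.
  - apply prec_iota_of_prec_circ; [assumption..|].
    eapply prec_trans; [|exact Hc]. now apply prec_mulr_self.
  - apply IH; [assumption|]. rewrite <- conjVg. apply prec_circ_conj; auto using simple_Pos.
    rewrite conjVg, !inf_inv by assumption.
    destruct (SSS_inf_sup_eq _ _ _ HY HYs). lia.
Qed.

End GarsideTheory.

Theorem mainTheorem5 (G : GarsideGroup) (X Y : G) (ss : list G) :
  oriented_path X Y ss ->
  (prec (lprod ss) (circ Y) -> black_path Y ss) /\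
  (prec (lprod ss) (circ (inv Y)) -> grey_path Y ss).
Proof.
  intros Hpath. split.
  - now apply (black_path_of_prec_circ X).
  - now apply (grey_path_of_prec_circ_inv X).
Qed.
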